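(* Let $\mathcal{S}=(X,\xrightarrow{\Sigma},\le)$ be a very-WSTS and $I_0\in\mathrm{Idl}(X)$. (1) For all $y,z\in X$, $w\in\Sigma^*$ and states $c$ of $\mathcal{A}_{I_0}$: if $y\xrightarrow{w}z$ and $y\in\mathrm{ideal}(c)$, then there is a state $d$ of $\mathcal{A}_{I_0}$ such that $d$ can be reached from $c$ by reading $w$ in $\mathcal{A}_{I_0}$ and $z\in\mathrm{ideal}(d)$. (2) For all $z\in X$, $w\in\Sigma^*$ and states $c,d$ of $\mathcal{K}_{I_0}$: if $d$ can be reached from $c$ by reading $w$ in $\mathcal{K}_{I_0}$ and $z\in\mathrm{ideal}(d)$, then there exist $y\in\mathrm{ideal}(c)$, a word $w'$ with $w\preceq w'$, and $z'\ge z$ such that $y\xrightarrow{w'}z'$.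
   Context: A (labeled, ordered) transition system is $\mathcal{S}=(X,\xrightarrow{\Sigma},\le)$: $X$ a set, $\Sigma$ a finite alphabet, relations $\xrightarrow{a}\subseteq X\times X$ ($a\in\Sigma$), $\le$ a quasi-ordering. Relations extend to words ($x\xrightarrow{\varepsilon}x$; $x\xrightarrow{wa}y$ iff $x\xrightarrow{w}x'\xrightarrow{a}y$ for some $x'$). $\mathrm{Post}(x,w)=\{y:x\xrightarrow{w}y\}$, extended to sets by union; $\downarrow D=\{x:x\le y,\ y\in D\}$. $u\preceq v$ means $u$ is a (scattered) subword of $v$. WSTS: $\le$ is a wqo and $x\xrightarrow{a}y$, $x'\ge x$ imply $x'\xrightarrow{w}y'$ for some $w$, $y'\ge y$. Strong monotonicity: $x\xrightarrow{a}y$, $x'\ge x$ imply $x'\xrightarrow{a}y'$ with $y'\ge y$; strong-strict: additionally $x'>x$ gives such $y'>y$. Deterministic: $|\mathrm{Post}(x,a)|\le1$. Ideals: nonempty downward-closed directed subsets; $\mathrm{Idl}(X)$ their set. $\mathrm{IdealDecomp}(D)$: the finite set of maximal ideals in a downward-closed $D$ (for $X$ wqo). Completion $\widehat{\mathcal{S}}=(\mathrm{Idl}(X),\Rightarrow_\Sigma,\subseteq)$, $I\xRightarrow{a}J$ iff $J\in\mathrm{IdealDecomp}(\downarrow\mathrm{Post}(I,a))$, extended to words; if deterministic, $w(I)$ is the unique $J$ with $I\xRightarrow{w}J$ when defined. Acceleration candidate: strictly increasing sequence of ideals; $\mathrm{Idl}_0(X)=\mathrm{Idl}(X)$, $\mathrm{Idl}_n(X)$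 = unions of acceleration candidates in $\mathrm{Idl}_{n-1}(X)$; finitely many levels if some $\mathrm{Idl}_n(X)=\emptyset$. $w^\infty(I)=\bigcup_kw^k(I)$ if $I\subset w(I)$, else $I$ ($w\in\Sigma^+$). Very-WSTS: WSTS with strong monotonicity whose completion is a deterministic WSTS (with $\subseteq$ a wqo on $\mathrm{Idl}(X)$) with strong-strict monotonicity, and $\mathrm{Idl}(X)$ has finitely many levels. Ideal Karp-Miller algorithm on input $(\mathcal{S},I_0)$ (terminating for very-WSTS): builds a rooted tree with node labels $(\mathrm{ideal}(c),\mathrm{numaccel}(c))\in\mathrm{Idl}(X)\times\mathbb{N}$ and letter-labeled arcs, starting from root $r:(I_0,0)$. While some node $c:(I,n)$ is unmarked: if a proper ancestor $c'$ has $\mathrm{ideal}(c')=I$, mark $c$; otherwise, if a proper ancestor $c'$ has $\mathrm{ideal}(c')\subset I$ and $\mathrm{numaccel}(c')=n$, relabel $c$ by $(w^\infty(I),n+1)$ where $w$ is the arc-label word from $c'$ to $c$ ($c$ is accelerated because of $c'$); then, with $(I,n)$ the current label, add for each $a\in\Sigma$ with $a(I)$ defined a child $d:(a(I),n)$ via an $a$-arc; mark $c$. $\mathcal{T}_{I_0}$ is the returned tree. The stuttering automaton $\mathcal{A}_{I_0}$: states are the nodes of $\mathcal{T}_{I_0}$, all accepting, initial state the root, transitions the arcs of $\mathcal{T}_{I_0}$ plus an $\varepsilon$-transition from each leaf $c$ to any ancestor $c'$ with $\mathrm{ideal}(c)=\mathrm{ideal}(c')$. The Karp-Miller automaton $\mathcal{K}_{I_0}$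 additionally has an $\varepsilon$-transition from each accelerated node $c$ to the ancestor $c'$ because of which it was accelerated. ''Reaching $d$ from $c$ by reading $w$'' allows $\varepsilon$-transitions. *)

(* finite alphabet = finType, words = seq,
   subword = subseq, ancestor = prefix. Sets are Prop-valued predicates. *)
From mathcomp Require Import all_boot.


Unset Printing Implicit Defensive.

Definition quasi_order {T : Type} (le : T -> T -> Prop) : Prop :=
  (forall x, le x x) /\ (forall x y z, le x y -> le y z -> le x z).

Definition wqo {T : Type} (le : T -> T -> Prop) : Prop :=
  quasi_order le /\
  forall f : nat -> T, exists i j, (i < j)%N /\ le (f i) (f j).

Definition lt_of {T : Type} (le : T -> T -> Prop) (x y : T) : Prop :=
  le x y /\ ~ le y x.

Fixpoint steps {S T : Type} (step : S -> T -> T -> Prop) (w : seq S) (x y : T)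
  : Prop :=
  match w with
  | [::] => x = y
  | a :: w' => exists x', step a x x' /\ steps step w' x' y
  end.

Definition wsts {S T : Type} (step : S -> T -> T -> Prop) (le : T -> T -> Prop)
  : Prop :=
  wqo le /\
  forall a x y x', step a x y -> le x x' ->
    exists w y', steps step w x' y' /\ le y y'.

Definition strong_mono {S T : Type} (step : S -> T -> T -> Prop)
  (le : T -> T -> Prop) : Prop :=
  forall a x y x', step a x y -> le x x' -> exists y', step a x' y' /\ le y y'.

Definition strong_strict_mono {S T : Type} (step : S -> T -> T -> Prop)
  (le : T -> T -> Prop) : Prop :=
  strong_mono step le /\
  forall a x y x', step a x y -> lt_of le x x' ->
    exists y', step a x' y' /\ lt_of le y y'.

Definition deterministic {S T : Type} (step : S -> T -> T -> Prop) : Prop :=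
  forall a x y y', step a x y -> step a x y' -> y = y'.

Definition subset {X : Type} (A B : X -> Prop) : Prop := forall x, A x -> B x.
Definition ssubset {X : Type} (A B : X -> Prop) : Prop :=
  subset A B /\ ~ subset B A.

Definition downclosed {X : Type} (le : X -> X -> Prop) (D : X -> Prop) : Prop :=
  forall x y, le x y -> D y -> D x.

Definition directed {X : Type} (le : X -> X -> Prop) (D : X -> Prop) : Prop :=
  forall x y, D x -> D y -> exists z, D z /\ le x z /\ le y z.

Definition is_ideal {X : Type} (le : X -> X -> Prop) (I : X -> Prop) : Prop :=
  (exists x, I x) /\ downclosed le I /\ directed le I.

Record Idl {X : Type} (le : X -> X -> Prop) := mkIdl {
  ival : X -> Prop;
  ivalP : is_ideal le ival }.
Arguments ival {X le}.

Definition isub {X : Type} {le : X -> X -> Prop} (I J : Idl le) : Prop :=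
  subset (ival I) (ival J).

Definition dpost {S X : Type} (step : S -> X -> X -> Prop) (le : X -> X -> Prop)
  (I : X -> Prop) (a : S) : X -> Prop :=
  fun x => exists y z, I y /\ step a y z /\ le x z.

Definition in_ideal_decomp {X : Type} (le : X -> X -> Prop) (D : X -> Prop)
  (J : Idl le) : Prop :=
  subset (ival J) D /\
  forall K : Idl le, isub J K -> subset (ival K) D -> isub K J.

Definition cstep {S X : Type} (step : S -> X -> X -> Prop) (le : X -> X -> Prop)
  (a : S) (I J : Idl le) : Prop :=
  in_ideal_decomp le (dpost step le (ival I) a) J.

(* w^oo(I) = J  (w nonempty in uses) *)
Definition winf {S X : Type} (step : S -> X -> X -> Prop) (le : X -> X -> Prop)
  (w : seq S) (I J : Idl le) : Prop :=
  ((exists K, steps (cstep step le) w I K /\ ssubset (ival I) (ival K)) /\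
   forall x, ival J x <->
     exists k K, steps (cstep step le) (flatten (nseq k w)) I K /\ ival K x)
  \/
  (~ (exists K, steps (cstep step le) w I K /\ ssubset (ival I) (ival K)) /\
   J = I).

Fixpoint level {X : Type} (le : X -> X -> Prop) (n : nat) : (X -> Prop) -> Prop :=
  match n with
  | 0 => is_ideal le
  | m.+1 => fun J => exists f : nat -> (X -> Prop),
      (forall k, level le m (f k)) /\
      (forall k, ssubset (f k) (f k.+1)) /\
      (forall x, J x <-> exists k, f k x)
  end.

Definition finitely_many_levels {X : Type} (le : X -> X -> Prop) : Prop :=
  exists n, forall J, ~ level le n J.

Definition very_wsts {S X : Type} (step : S -> X -> X -> Prop)
  (le : X -> X -> Prop) : Prop :=
  wsts step le /\ strong_mono step le /\
  wsts (cstep step le) (@isub X le) /\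
  deterministic (cstep step le) /\
  strong_strict_mono (cstep step le) (@isub X le) /\
  finitely_many_levels le.

(* ---------- Karp-Miller trees ----------
   A node is identified with the word of arc labels from the root
   (each node has at most one a-child for each letter a). *)
Record kmtree (S : finType) {X : Type} (le : X -> X -> Prop) := KMTree {
  node : seq S -> Prop;
  lab : seq S -> Idl le;       (* ideal(c), final label *)
  nacc : seq S -> nat;         (* numaccel(c), final label *)
  ilab : seq S -> Idl le;      (* ideal with which c was created *)
  inum : seq S -> nat;         (* numaccel with which c was created *)
  accfrom : seq S -> option (seq S) (* Some c' : c accelerated because of c' *)
}.
Arguments node {S X le}. Arguments lab {S X le}. Arguments nacc {S X le}.
Arguments ilab {S X le}. Arguments inum {S X le}. Arguments accfrom {S X le}.

Definition proper_anc {S : finType} (c' c : seq S) : bool :=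
  prefix c' c && (size c' < size c)%N.

(* T is a tree returned by some run of the Ideal Karp-Miller algorithm on
   (step, le, I0). *)
Definition km_output {S : finType} {X : Type} (step : S -> X -> X -> Prop)
  (le : X -> X -> Prop) (I0 : Idl le) (T : kmtree S le) : Prop :=
  (exists s : seq (seq S), forall c, node T c -> c \in s) /\
  node T [::] /\
  (forall c a, node T (rcons c a) -> node T c) /\
  ilab T [::] = I0 /\ inum T [::] = 0 /\
  (forall c a, node T (rcons c a) ->
     cstep step le a (lab T c) (ilab T (rcons c a)) /\
     inum T (rcons c a) = nacc T c) /\
  (forall c, node T c ->
     let I := ilab T c in let n := inum T c in
     (* marked because of an equal proper ancestor: no change, no children *)
     ((exists c', proper_anc c' c /\ lab T c' = I) /\
        lab T c = I /\ nacc T c = n /\ accfrom T c = None /\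
        (forall a, ~ node T (rcons c a)))
     \/
     (~ (exists c', proper_anc c' c /\ lab T c' = I) /\
      (* acceleration because of c', or none possible *)
      ((exists c', proper_anc c' c /\ ssubset (ival (lab T c')) (ival I) /\
          nacc T c' = n /\ accfrom T c = Some c' /\
          winf step le (drop (size c') c) I (lab T c) /\ nacc T c = n.+1)
       \/
       (~ (exists c', proper_anc c' c /\ ssubset (ival (lab T c')) (ival I) /\
            nacc T c' = n) /\
        accfrom T c = None /\ lab T c = I /\ nacc T c = n)) /\
      (forall a, node T (rcons c a) <-> exists J, cstep step le a (lab T c) J))).

Definition leaf {S : finType} {X : Type} {le : X -> X -> Prop}
  (T : kmtree S le) (c : seq S) : Prop :=
  node T c /\ forall a, ~ node T (rcons c a).

(* epsilon-transitions of the stuttering automaton A_{I0} *)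
Definition eps_A {S : finType} {X : Type} {le : X -> X -> Prop}
  (T : kmtree S le) (c c' : seq S) : Prop :=
  leaf T c /\ prefix c' c /\ lab T c = lab T c'.

(* epsilon-transitions of the Karp-Miller automaton K_{I0} *)
Definition eps_K {S : finType} {X : Type} {le : X -> X -> Prop}
  (T : kmtree S le) (c c' : seq S) : Prop :=
  eps_A T c c' \/ (node T c /\ accfrom T c = Some c').

Inductive reach {S : finType} {X : Type} {le : X -> X -> Prop}
  (T : kmtree S le) (eps : seq S -> seq S -> Prop)
  : seq S -> seq S -> seq S -> Prop :=
  | reach_refl c : node T c -> reach T eps c [::] c
  | reach_eps c c' w d : eps c c' -> reach T eps c' w d -> reach T eps c w d
  | reach_arc c a w d : node T c -> node T (rcons c a) ->
      reach T eps (rcons c a) w d -> reach T eps c (a :: w) d.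

(* (1) A run y -w-> z from a point of ideal(c) is followed letter by letter:
   if y -a-> y' then a(ideal(c)) is defined and, the completion being
   deterministic, it is the unique maximal ideal of the down-closure of
   Post(ideal(c), a), so it contains y'. Maximal ideals containing a given
   point exist because a downward-closed subset of a wqo is a finite union of
   ideals. At a marked leaf one first takes the epsilon-transition back to its
   equally labelled ancestor, which is expanded.
   (2) Conversely every point of a label is covered by a concrete run from
   the parent's label: a creation label lies below Post of the parent's label,
   and an accelerated label is the union of the iterates w^k(I), whose points
   are covered by runs on w^k. Strong monotonicity concatenates these runs;
   the inserted words w^k are why only w is a subword of w'. *)
From Stdlib Require Import Classical ClassicalEpsilon.
From Stdlib Require List.
From Pilot Require Import Defs.
From mathcomp Require Import all_boot.
(* Re-import so that [subset] is the one of Defs, not fintype's. *)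
Import Defs.

Section DownClosedSets.

Context {X : Type} {le : X -> X -> Prop}.

Definition down_ssub (D' D : X -> Prop) : Prop :=
  downclosed le D' /\ subset D' D /\ exists x, D x /\ ~ D' x.

Definition ideal_cover (D : X -> Prop) (L : list (X -> Prop)) : Prop :=
  (forall I, List.In I L -> is_ideal le I) /\
  (forall x, D x <-> exists I, List.In I L /\ I x).

(* Ideals are prime: directedness prevents J from spreading over two members. *)
Lemma ideal_sub_cover (L : list (X -> Prop)) (J : X -> Prop) :
  (forall I, List.In I L -> downclosed le I) -> is_ideal le J ->
  (forall x, J x -> exists I, List.In I L /\ I x) ->
  exists I, List.In I L /\ subset J I.
Proof.
elim: L J => [|I L IH] J hdc [[x0 hx0] [hJdc hdir]] hcov.
  by have [? [[] _]] := hcov x0 hx0.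
case: (classic (subset J I)) => [hJI|hJI]; first by exists I; split => //; left.
have [x1 [hx1 hnx1]] : exists x1, J x1 /\ ~ I x1.
  apply: NNPP => h; apply: hJI => x hx; apply: NNPP => hn; apply: h; by exists x.
have [I' [hI' hJI']] : exists I', List.In I' L /\ subset J I'.
  apply: IH; first by move=> I' hI'; apply: hdc; right.
    by split; [exists x0|split].
  move=> x hx; have [z [hz [hxz hx1z]]] := hdir x x1 hx hx1.
  have [I' [[<-|hI'] hzI']] := hcov z hz.
    by case: hnx1; apply: (hdc I) hx1z hzI'; left.
  by exists I'; split => //; apply: (hdc I') hxz hzI'; right.
by exists I'; split => //; right.
Qed.

Lemma exists_maximal_in (P : (X -> Prop) -> Prop) (L : list (X -> Prop)) :
  (exists I, List.In I L /\ P I) ->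
  exists M, List.In M L /\ P M /\
    forall I, List.In I L -> P I -> subset M I -> subset I M.
Proof.
elim: L => [|A L IH] [I [hI hPI]]; first by case: hI.
case: (classic (exists I, List.In I L /\ P I)) => [/IH [M [hM [hPM hmax]]]|hnL].
  case: (classic (P A /\ subset M A)) => [[hPA hMA]|hnA].
    exists A; split; [by left | split => // I' [<-|hI'] hPI' hAI'] => //.
    by move=> x /(hmax I' hI' hPI' (fun y hy => hAI' y (hMA y hy))) /hMA.
  exists M; split; [by right | split => // I' [<-|hI'] hPI' hMI'].
    by case: hnA.
  exact: hmax.
have <- : I = A by case: hI => // hI; case: hnL; exists I.
exists I; split; [by left | split => // I' [<-|hI'] hPI'] => //.
by case: hnL; exists I'.
Qed.

Hypothesis hw : wqo le.

Lemma down_ssub_wf : well_founded down_ssub.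
Proof.
move=> D0; apply: NNPP => hD0.
have [next hnext] : exists next : (X -> Prop) -> (X -> Prop), forall D,
    ~ Acc down_ssub D -> down_ssub (next D) D /\ ~ Acc down_ssub (next D).
  apply: (choice (fun D D' => ~ Acc down_ssub D ->
                               down_ssub D' D /\ ~ Acc down_ssub D')) => D.
  case: (classic (Acc down_ssub D)) => [hD|hD]; first by exists D.
  apply: NNPP => hn; apply: hD; constructor => D' hD'.
  by apply: NNPP => hA; apply: hn; exists D'.
(* A strictly descending chain s_n yields the bad sequence x_n in s_n \ s_(n+1). *)
pose s n := iter n next D0.
have hs n : down_ssub (s n.+1) (s n) /\ ~ Acc down_ssub (s n.+1).
  by elim: n => [|n IH]; apply: hnext => //; case: IH.
have [x hx] : exists x : nat -> X, forall n, s n (x n) /\ ~ s n.+1 (x n).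
  by apply: (choice (fun n y => s n y /\ ~ s n.+1 y)) => n; apply: (hs n).1.2.2.
have s_decr i k : subset (s (i + k)) (s i).
  elim: k => [|k IH] y; first by rewrite addn0.
  by rewrite addnS => /(hs _).1.2.1 /IH.
have [i [j [ltij hij]]] := hw.2 x.
apply: (hx i).2; apply: ((hs i).1.1 _ _ hij).
by move: (hx j).1; rewrite -(subnKC ltij) => /s_decr.
Qed.

Lemma downclosed_ideal_cover (D : X -> Prop) :
  downclosed le D -> exists L, ideal_cover D L.
Proof.
have [[le_refl le_trans] _] := hw.
elim: (down_ssub_wf D) => {}D _ IH hdc.
case: (classic (exists x, D x)) => [hne|hemp]; last first.
  by exists nil; split => // x; split => [hx|[I [[] _]]]; case: hemp; exists x.
case: (classic (directed le D)) => [hdir|hndir].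
  exists (D :: nil); split; first by move=> I [<-|[]].
  by move=> x; split => [hx|[I [[<-|[]] hx]]] //; exists D; split => //; left.
(* Otherwise D is the union of the strictly smaller sets D \ up(x) and
   D \ up(y), for some x, y without common upper bound in D. *)
have [x [y [hx [hy hno]]]] :
    exists x y, D x /\ D y /\ ~ exists z, D z /\ le x z /\ le y z.
  apply: NNPP => h; apply: hndir => a b ha hb; apply: NNPP => hab; apply: h.
  by exists a, b; do 2!split => //; case=> z hz; apply: hab; exists z.
have cover_avoiding u : D u -> exists L, ideal_cover (fun z => D z /\ ~ le u z) L.
  move=> hu; have hdcu : downclosed le (fun z => D z /\ ~ le u z).
    move=> a b hab [hb hn]; split; first exact: hdc hab hb.
    by move=> hua; apply: hn; apply: le_trans hua hab.
  apply: (IH _ _ hdcu); split => //; split; first by move=> z [].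
  by exists u; split => //; case=> _ hn; apply: hn; apply: le_refl.
have [Lx [hLx hcx]] := cover_avoiding x hx.
have [Ly [hLy hcy]] := cover_avoiding y hy.
exists (Lx ++ Ly); split.
  by move=> I hI; case: (List.in_app_or _ _ _ hI) => [/hLx|/hLy].
move=> z; split => [hz|[I [/(List.in_app_or _ _ _) [hI|hI] hIz]]].
- case: (classic (le x z)) => hxz.
    case: (classic (le y z)) => hyz; first by case: hno; exists z.
    have [I [? ?]] := (hcy z).1 (conj hz hyz).
    by exists I; split => //; apply: List.in_or_app; right.
  have [I [? ?]] := (hcx z).1 (conj hz hxz).
  by exists I; split => //; apply: List.in_or_app; left.
- by have [] := (hcx z).2 (ex_intro _ I (conj hI hIz)).
- by have [] := (hcy z).2 (ex_intro _ I (conj hI hIz)).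
Qed.

Lemma ideal_decomp_cover (D : X -> Prop) (x : X) :
  downclosed le D -> D x -> exists J, in_ideal_decomp le D J /\ ival J x.
Proof.
move=> hdc hDx; have [L [hLi hLc]] := downclosed_ideal_cover _ hdc.
have [M [hM [hMx hmax]]] := exists_maximal_in (fun I => I x) _ ((hLc x).1 hDx).
exists (@mkIdl _ le M (hLi M hM)); split => //; split => /= [y hy|K hMK hKD].
  by apply/(hLc y).2; exists M.
have [I [hI hKI]] : exists I, List.In I L /\ subset (ival K) I.
  apply: ideal_sub_cover; [by move=> I /hLi [_ []] | exact: ivalP |].
  by move=> y /hKD /(hLc y).1.
have hMI : subset M I by move=> y /hMK /hKI.
by move=> y /hKI /(hmax I hI (hMI x hMx) hMI).
Qed.

End DownClosedSets.

Section Runs.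

Context {S X : Type} {step : S -> X -> X -> Prop} {le : X -> X -> Prop}.

Lemma steps_cat u v x y z :
  steps step u x y -> steps step v y z -> steps step (u ++ v) x z.
Proof.
elim: u x => [|a u IH] x /=; first by move=> ->.
by move=> [x' [hx hu]] hv; exists x'; split => //; apply: IH hu hv.
Qed.

Lemma cstep_of_step {I : Idl le} {a y y'} : wqo le ->
  ival I y -> step a y y' -> exists J, cstep step le a I J /\ ival J y'.
Proof.
move=> hw hy hs; have [[le_refl le_trans] _] := hw.
apply: ideal_decomp_cover => //; last by exists y, y'; do 2!split => //.
move=> u v huv [y0 [z0 [? [? hvz]]]].
by exists y0, z0; do 2!split => //; apply: le_trans huv hvz.
Qed.

Hypotheses (hq : quasi_order le) (hsm : strong_mono step le).

Lemma steps_mono {w x z x'} : steps step w x z -> le x x' ->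
  exists z', steps step w x' z' /\ le z z'.
Proof.
elim: w x x' => [|a w IH] x x' /=; first by move=> -> hxx'; exists x'.
move=> [u [hu hw]] /(hsm _ _ _ _ hu) [u' [hu' /(IH _ _ hw) [z' [hw' hzz']]]].
by exists z'; split => //; exists u'.
Qed.

Lemma csteps_covered {w} {I K : Idl le} {x} :
  steps (cstep step le) w I K -> ival K x ->
  exists y z, ival I y /\ steps step w y z /\ le x z.
Proof.
have [le_refl le_trans] := hq.
elim: w I => [|a w IH] I /=; first by move=> -> hx; exists x, x.
move=> [I1 [hI1 hw]] /(IH _ hw) [y1 [z1 [/hI1.1 [y [u [hy [hu hy1u]]]] [hs1 hxz1]]]].
have [z [hs hz1z]] := steps_mono hs1 hy1u.
by exists y, z; do 2!split => //; [exists u | apply: le_trans hxz1 hz1z].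
Qed.

End Runs.

Section KarpMillerTree.

Context {S : finType} {X : Type} {step : S -> X -> X -> Prop}.
Context {le : X -> X -> Prop} {I0 : Idl le} {T : kmtree S le}.
Hypothesis hkm : km_output step le I0 T.

Definition expanded (c : seq S) : Prop :=
  forall a, node T (rcons c a) <-> exists J, cstep step le a (lab T c) J.

Lemma node_rcons {c a} : node T (rcons c a) -> node T c.
Proof. by have [_ [_ [hpre _]]] := hkm; apply: hpre. Qed.

Lemma node_cat {c s} : node T (c ++ s) -> node T c.
Proof.
elim/last_ind: s => [|s b IH]; first by rewrite cats0.
by rewrite -rcons_cat => /node_rcons.
Qed.

Lemma child_ilab {c a} :
  node T (rcons c a) -> cstep step le a (lab T c) (ilab T (rcons c a)).
Proof. by have [_ [_ [_ [_ [_ [hch _]]]]]] := hkm; move=> /hch []. Qed.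

Lemma lab_iterates {c x} : node T c -> ival (lab T c) x ->
  exists u K, steps (cstep step le) u (ilab T c) K /\ ival K x.
Proof.
have [_ [_ [_ [_ [_ [_ hproc]]]]]] := hkm.
move=> /hproc /= [[_ [-> _]]|[_ [[[c' [_ [_ [_ [_ [hwinf _]]]]]]|[_ [_ [-> _]]]] _]]] hx;
  try by exists nil, (ilab T c).
case: hwinf => [[_ /(_ x) [/(_ hx) [k [K hK]] _]]|[_ e]].
  by exists (flatten (nseq k (drop (size c') c))), K.
by exists nil, (ilab T c); rewrite -e.
Qed.

Lemma ilab_sub_lab {c} : node T c -> subset (ival (ilab T c)) (ival (lab T c)).
Proof.
have [_ [_ [_ [_ [_ [_ hproc]]]]]] := hkm.
move=> /hproc /= [[_ [-> _]]|[_ [[[c' [_ [_ [_ [_ [hwinf _]]]]]]|[_ [_ [-> _]]]] _]]] //.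
case: hwinf => [[_ hJ] x hx|[_ ->]] //.
by apply/(hJ x).2; exists 0, (ilab T c).
Qed.

Lemma accfrom_sub_ilab {c c'} : node T c -> accfrom T c = Some c' ->
  subset (ival (lab T c')) (ival (ilab T c)).
Proof.
have [_ [_ [_ [_ [_ [_ hproc]]]]]] := hkm.
move=> /hproc /= [[_ [_ [_ [-> _]]]]|[_ [[[c'' [_ [hss [_ [-> _]]]]]|[_ [-> _]]] _]]] //.
by case=> <-; apply: hss.1.
Qed.

Lemma marked_or_expanded {c} : node T c ->
  (leaf T c /\ exists c', proper_anc c' c /\ lab T c' = lab T c) \/ expanded c.
Proof.
have [_ [_ [_ [_ [_ [_ hproc]]]]]] := hkm.
move=> hc; case: (hproc c hc) => /= [[[c' [hp he]] [hl [_ [_ hno]]]]|[_ [_ hexp]]].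
  by left; split => //; exists c'; rewrite hl.
by right.
Qed.

(* A proper ancestor has a child, so it was not marked. *)
Lemma proper_anc_expanded {c c'} : node T c -> proper_anc c' c -> expanded c'.
Proof.
move=> hc /andP [/prefixP [[|b s] ec] hsz]; subst c.
  by rewrite cats0 ltnn in hsz.
have hc'b : node T (rcons c' b) by move: hc; rewrite -cat_rcons => /node_cat.
case: (marked_or_expanded (node_rcons hc'b)) => [[[_ hleaf] _]|] //.
by case: (hleaf b).
Qed.

Hypotheses (hw : wqo le) (hdet : deterministic (cstep step le)).

Lemma expanded_child {c a y y'} : expanded c -> ival (lab T c) y -> step a y y' ->
  node T (rcons c a) /\ ival (lab T (rcons c a)) y'.
Proof.
move=> hexp hy hs; have [J [hJ hJy]] := cstep_of_step hw hy hs.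
have hca : node T (rcons c a) by apply/hexp; exists J.
split => //; apply: ilab_sub_lab => //.
by rewrite -(hdet _ _ _ _ hJ (child_ilab hca)).
Qed.

Lemma step_in_tree {c a y y'} : node T c -> ival (lab T c) y -> step a y y' ->
  exists c0, (c0 = c \/ eps_A T c c0) /\
    node T (rcons c0 a) /\ ival (lab T (rcons c0 a)) y'.
Proof.
move=> hc hy hs; case: (marked_or_expanded hc) => [[hleaf [c' [hanc he]]]|hexp].
  rewrite -he in hy; have [hca hy'] := expanded_child (proper_anc_expanded hc hanc) hy hs.
  by exists c'; split => //; right; split => //; split => //; case/andP: hanc.
by have [? ?] := expanded_child hexp hy hs; exists c; split => //; left.
Qed.

Lemma reach_A_complete y z w c : steps step w y z -> node T c -> ival (lab T c) y ->
  exists d, reach T (eps_A T) c w d /\ ival (lab T d) z.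
Proof.
elim: w y c => [|a w IH] y c /=.
  by move=> -> hc hz; exists c; split => //; constructor.
move=> [y' [hya hw']] hc hy.
have [c0 [hc0 [hc0a hy']]] := step_in_tree hc hy hya.
have [d [hr hz]] := IH _ _ hw' hc0a hy'.
have hc0r : reach T (eps_A T) c0 (a :: w) d.
  exact: reach_arc (node_rcons hc0a) hc0a hr.
by exists d; split => //; case: hc0 => [<-|heps] //; apply: reach_eps heps hc0r.
Qed.

End KarpMillerTree.

Section KarpMillerSoundness.

Context {S : finType} {X : Type} {step : S -> X -> X -> Prop}.
Context {le : X -> X -> Prop} {I0 : Idl le} {T : kmtree S le}.
Hypothesis hkm : km_output step le I0 T.
Hypotheses (hq : quasi_order le) (hsm : strong_mono step le).

Lemma child_lab_covered {c a x} : node T (rcons c a) -> ival (lab T (rcons c a)) x ->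
  exists y u z, ival (lab T c) y /\ steps step (a :: u) y z /\ le x z.
Proof.
have [le_refl le_trans] := hq.
move=> hca /(lab_iterates hkm hca) [u [K [hu hK]]].
have [y0 [z0 [/(child_ilab hkm hca).1 [y [t [hy [ht hy0t]]]] [hs0 hxz0]]]] :=
  csteps_covered hq hsm hu hK.
have [z [hs hz0z]] := steps_mono hsm hs0 hy0t.
by exists y, u, z; do 2!split => //; [exists t | apply: le_trans hxz0 hz0z].
Qed.

Lemma reach_K_sound c w d z : reach T (eps_K T) c w d -> ival (lab T d) z ->
  exists y w' z', ival (lab T c) y /\ subseq w w' /\ le z z' /\ steps step w' y z'.
Proof.
have [le_refl le_trans] := hq.
move=> hr; elim: hr z => {c w d} [c _ z hz|c c' w d heps _ IH z|c a w d _ hca _ IH z].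
- by exists z, nil, z.
- move=> /IH [y [w' [z' [hy hrest]]]]; exists y, w', z'; split => //.
  case: heps => [[_ [_ ->]] //|[hc hacc]].
  by move: hy => /(accfrom_sub_ilab hkm hc hacc) /(ilab_sub_lab hkm hc).
- move=> /IH [y1 [w1 [z1 [/(child_lab_covered hca) [y [u [u1 [hy [hs hy1u1]]]]]
    [hsub [hzz1 hs1]]]]]].
  have [z2 [hs2 hz1z2]] := steps_mono hsm hs1 hy1u1.
  exists y, ((a :: u) ++ w1), z2; split => //; split.
    by rewrite -cat1s; apply: cat_subseq hsub; rewrite /= eqxx sub0seq.
  by split; [apply: le_trans hzz1 hz1z2 | apply: steps_cat hs hs2].
Qed.

End KarpMillerSoundness.

Theorem proposition11 (S : finType) (X : Type) (step : S -> X -> X -> Prop)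
  (le : X -> X -> Prop) (I0 : Idl le) (T : kmtree S le) :
  very_wsts step le ->
  km_output step le I0 T ->
  (forall (y z : X) (w : seq S) (c : seq S),
     steps step w y z -> node T c -> ival (lab T c) y ->
     exists d, reach T (eps_A T) c w d /\ ival (lab T d) z)
  /\
  (forall (z : X) (w : seq S) (c d : seq S),
     node T c -> reach T (eps_K T) c w d -> ival (lab T d) z ->
     exists (y : X) (w' : seq S) (z' : X),
       ival (lab T c) y /\ subseq w w' /\ le z z' /\ steps step w' y z').
Proof.
move=> [[hw _] [hsm [_ [hdet _]]]] hkm; split.
- exact: reach_A_complete hkm hw hdet.
- by move=> z w c d _ /(reach_K_sound hkm hw.1 hsm); apply.
Qed.
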